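(* Let $R$ be a commutative ring with identity, $\mathcal S$ an associative $R$-algebra with identity, $\mathcal M$ a $2$-torsion free bimodule over $\mathcal S$, $\delta$ a derivation on $\mathcal S$ and $f:\mathcal S\to\mathcal M$ a bimodule homomorphism over $\mathcal S$. If $D:\mathcal S\to\mathcal M$ is a Jordan $(\delta,f)$-derivation on $\mathcal M$, then for all $x,y,z\in\mathcal S$, $$D(xyz+zyx)=D(x)yz+D(z)yx+f(x)\delta(y)z+f(z)\delta(y)x+f(x)y\delta(z)+f(z)y\delta(x).$$
   Context: A derivation on $\mathcal S$ is an additive map $\delta$ with $\delta(ab)=\delta(a)b+a\delta(b)$. An additive map $D:\mathcal S\to\mathcal M$ is a Jordan $(\delta,f)$-derivation if $D(x^2)=D(x)x+f(x)\delta(x)$ for all $x\in\mathcal S$. $\mathcal M$ is $2$-torsion free if $2m=0$ implies $m=0$. *)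

From HB Require Import structures.
From mathcomp Require Import all_boot all_order all_algebra.
Set Implicit Arguments. Unset Strict Implicit. Unset Printing Implicit Defensive.
Import GRing.Theory.
Local Open Scope ring_scope.

Definition additive_map (A B : zmodType) (g : A -> B) : Prop :=
  forall a b, g (a + b) = g a + g b.

Record is_bimodule (S : ringType) (M : zmodType)
    (la : S -> M -> M) (ra : M -> S -> M) : Prop := {
  bm_laDl : forall a b m, la (a + b) m = la a m + la b m;
  bm_laDr : forall a m n, la a (m + n) = la a m + la a n;
  bm_raDl : forall m n a, ra (m + n) a = ra m a + ra n a;
  bm_raDr : forall m a b, ra m (a + b) = ra m a + ra m b;
  bm_la1  : forall m, la 1 m = m;
  bm_ra1  : forall m, ra m 1 = m;
  bm_laM  : forall a b m, la (a * b) m = la a (la b m);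
  bm_raM  : forall m a b, ra m (a * b) = ra (ra m a) b;
  bm_lra  : forall a m b, la a (ra m b) = ra (la a m) b }.

Definition two_torsion_free (M : zmodType) : Prop :=
  forall m : M, m *+ 2 = 0 -> m = 0.

Definition derivation (S : ringType) (delta : S -> S) : Prop :=
  additive_map delta /\ forall a b, delta (a * b) = delta a * b + a * delta b.

Definition bimodule_hom (S : ringType) (M : zmodType)
    (la : S -> M -> M) (ra : M -> S -> M) (f : S -> M) : Prop :=
  additive_map f /\ (forall a x, f (a * x) = la a (f x))
                 /\ (forall x a, f (x * a) = ra (f x) a).

Definition jordan_delta_f_derivation (S : ringType) (M : zmodType)
    (ra : M -> S -> M) (delta : S -> S) (f D : S -> M) : Prop :=
  additive_map D /\ forall x, D (x * x) = ra (D x) x + ra (f x) (delta x).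

From mathcomp Require Import all_boot all_order all_algebra.
Set Implicit Arguments. Unset Strict Implicit. Unset Printing Implicit Defensive.
Import GRing.Theory.
Local Open Scope ring_scope.

(* Write L(a, b) := D(a)b + f(a)delta(b), so that the Jordan identity reads
   D(aa) = L(a, a).  Polarizing gives D(ab + ba) = L(a, b) + L(b, a).
   Computing D(a(ac + ca) + (ac + ca)a) once by polarization and once through
   a(ac + ca) + (ac + ca)a = (aa)c + c(aa) + 2 aca yields
   2 D(aca) = 2 L(a, ca), hence D(aca) = L(a, ca) as M is 2-torsion free.
   Polarizing this identity in a = x + z gives the theorem. *)

Lemma mulr2n_inj (M : zmodType) :
  two_torsion_free M -> injective (fun m : M => m *+ 2).
Proof.
move=> tf m n /= e; apply/eqP; rewrite -subr_eq0; apply/eqP/tf.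
by rewrite mulrnBl e subrr.
Qed.

Lemma jordan_sqrD (S : pzRingType) (a b : S) :
  (a + b) * (a + b) = a * a + b * b + (a * b + b * a).
Proof. by rewrite mulrDl !mulrDr [b * a + _]addrC addrACA. Qed.

Lemma jordan_triple (S : pzRingType) (a c : S) :
  a * (a * c + c * a) + (a * c + c * a) * a
  = a * a * c + c * (a * a) + (a * c * a) *+ 2.
Proof.
by rewrite mulrDr mulrDl !mulrA mulr2n [a * c * a + _]addrC addrACA.
Qed.

Section JordanDeltaFDerivation.

Variables (S : pzRingType) (M : zmodType) (ra : M -> S -> M).
Variables (delta : S -> S) (f D : S -> M).

Definition leibniz_term (a b : S) : M := ra (D a) b + ra (f a) (delta b).

Hypothesis raDl : forall m n a, ra (m + n) a = ra m a + ra n a.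
Hypothesis raDr : forall m a b, ra m (a + b) = ra m a + ra m b.
Hypothesis raM : forall m a b, ra m (a * b) = ra (ra m a) b.
Hypothesis deltaD : additive_map delta.
Hypothesis deltaM : forall a b, delta (a * b) = delta a * b + a * delta b.
Hypothesis fD : additive_map f.
Hypothesis fM : forall a b, f (a * b) = ra (f a) b.
Hypothesis DD : additive_map D.
Hypothesis D_sqr : forall a, D (a * a) = leibniz_term a a.

Lemma leibniz_termDl a b c :
  leibniz_term (a + b) c = leibniz_term a c + leibniz_term b c.
Proof. by rewrite /leibniz_term DD fD !raDl addrACA. Qed.

Lemma leibniz_termDr a b c :
  leibniz_term a (b + c) = leibniz_term a b + leibniz_term a c.
Proof. by rewrite /leibniz_term deltaD !raDr addrACA. Qed.

Lemma leibniz_term_mulr a b c :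
  leibniz_term a (b * c) = ra (leibniz_term a b) c + ra (f a) (b * delta c).
Proof. by rewrite /leibniz_term deltaM !raDr raDl -!raM addrA. Qed.

Lemma f_mulr_delta a b c : ra (f (a * b)) (delta c) = ra (f a) (b * delta c).
Proof. by rewrite fM raM. Qed.

Lemma D_jordan a b : D (a * b + b * a) = leibniz_term a b + leibniz_term b a.
Proof.
have := D_sqr (a + b).
rewrite jordan_sqrD DD [D (a * a + _)]DD !D_sqr.
rewrite leibniz_termDl !leibniz_termDr [leibniz_term b a + _]addrC [RHS]addrACA.
exact: addrI.
Qed.

Lemma leibniz_term_sqrl a c : leibniz_term (a * a) c = leibniz_term a (a * c).
Proof.
by rewrite leibniz_term_mulr -f_mulr_delta /leibniz_term D_sqr raDl -!raM.
Qed.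

Lemma leibniz_term_jordanl a c :
  leibniz_term (a * c) a + leibniz_term (c * a) a
  = leibniz_term a (c * a) + leibniz_term c (a * a).
Proof.
rewrite !leibniz_term_mulr [RHS]addrACA -raDl -D_jordan.
by rewrite /leibniz_term !f_mulr_delta addrACA -raDl DD.
Qed.

Hypothesis M_tf : two_torsion_free M.

Lemma D_triple a c : D (a * c * a) = leibniz_term a (c * a).
Proof.
apply: mulr2n_inj M_tf _ _ _ => /=.
have := D_jordan a (a * c + c * a).
rewrite jordan_triple DD [D (_ *+ 2)]DD -[D (a * c * a) + _]mulr2n D_jordan.
rewrite leibniz_termDr !leibniz_termDl leibniz_term_jordanl leibniz_term_sqrl.
rewrite [leibniz_term a (c * a) + _]addrC [RHS]addrACA.
rewrite -[leibniz_term a (c * a) + _]mulr2n.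
exact: addrI.
Qed.

Lemma D_triple_sym x y z :
  D (x * y * z + z * y * x) = leibniz_term x (y * z) + leibniz_term z (y * x).
Proof.
have := D_triple (x + z) y.
have -> : (x + z) * y * (x + z) = x * y * x + z * y * z + (x * y * z + z * y * x).
  by rewrite mulrDr !mulrDl [LHS]addrACA [RHS]addrACA [z * y * z + _]addrC.
rewrite DD [D (x * y * x + _)]DD !D_triple leibniz_termDl !mulrDr !leibniz_termDr.
rewrite [leibniz_term z (y * x) + _]addrC [RHS]addrACA.
exact: addrI.
Qed.

End JordanDeltaFDerivation.

Theorem lemma3p6 (R : comRingType) (S : algType R) (M : zmodType)
    (la : S -> M -> M) (ra : M -> S -> M)
    (delta : S -> S) (f D : S -> M) :
  is_bimodule la ra ->
  two_torsion_free M ->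
  derivation delta ->
  bimodule_hom la ra f ->
  jordan_delta_f_derivation ra delta f D ->
  forall x y z : S,
    D (x * y * z + z * y * x) =
      ra (D x) (y * z) + ra (D z) (y * x)
    + ra (f x) (delta y * z) + ra (f z) (delta y * x)
    + ra (f x) (y * delta z) + ra (f z) (y * delta x).
Proof.
move=> bm tf [deltaD deltaM] [fD [_ fM]] [DD D_sqr] x y z.
have raDr := bm_raDr bm.
rewrite (D_triple_sym (bm_raDl bm) raDr (bm_raM bm) deltaD deltaM fD fM DD D_sqr tf).
rewrite /leibniz_term !deltaM !raDr.
by rewrite [LHS]addrACA [ra (f x) _ + _ + _]addrACA !addrA.
Qed.
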